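(* For every $d\ge 1$, no graph of the form $K_{d+1}\star G_3$ (with $G_3$ any graph on $3$ vertices) is $d$-ball packable.
   Context: $K_n$ is the complete graph on $n$ vertices, $G_3$ an arbitrary graph on $3$ vertices, $\star$ the graph join. A $d$-ball in $\hat{\mathbb R}^d$ is a closed ball, closed exterior of an open ball with $\infty$, or a closed half-space with $\infty$; a $d$-ball packing is a collection of $d$-balls with disjoint interiors; its tangency graph joins balls meeting in exactly one point; a graph is $d$-ball packable if isomorphic to the tangency graph of some $d$-ball packing. *)

From Stdlib Require Import Reals.
From mathcomp Require Import all_boot.
Local Open Scope R_scope.
Set Implicit Arguments. Unset Strict Implicit. Unset Printing Implicit Defensive.

Definition vec (d : nat) : Type := 'I_d -> R.

Definition dot (d : nat) (u v : vec d) : R :=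
  \big[Rplus/0]_(i < d) (Rmult (u i) (v i)).

Definition sqdist (d : nat) (u v : vec d) : R :=
  \big[Rplus/0]_(i < d) (Rmult (Rminus (u i) (v i)) (Rminus (u i) (v i))).

(* Points of the one-point compactification \hat R^d : None is infinity. *)
Definition hpoint (d : nat) : Type := option (vec d).

Inductive dball (d : nat) : Type :=
| BallIn  of vec d & R   (* closed ball, center c, radius r > 0 *)
| BallOut of vec d & R   (* closed exterior of the open ball B(c,r), r > 0, plus infinity *)
| HalfSp  of vec d & R.  (* closed half-space {x | a.x <= b}, a <> 0, plus infinity *)

Definition valid_ball (d : nat) (B : dball d) : Prop :=
  match B with
  | BallIn _ r => (0 < r)
  | BallOut _ r => (0 < r)
  | HalfSp a _ => a <> (fun _ => 0)
  end.

Definition in_ball (d : nat) (B : dball d) (p : hpoint d) : Prop :=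
  match B, p with
  | BallIn c r, Some x => (sqdist x c <= r * r)
  | BallIn _ _, None => False
  | BallOut c r, Some x => (r * r <= sqdist x c)
  | BallOut _ _, None => True
  | HalfSp a b, Some x => (dot a x <= b)
  | HalfSp _ _, None => True
  end.

(* Its interior in \hat R^d (infinity lies on the boundary of a
   half-space-with-infinity, but in the interior of an exterior ball). *)
Definition in_interior (d : nat) (B : dball d) (p : hpoint d) : Prop :=
  match B, p with
  | BallIn c r, Some x => (sqdist x c < r * r)
  | BallIn _ _, None => False
  | BallOut c r, Some x => (r * r < sqdist x c)
  | BallOut _ _, None => True
  | HalfSp a b, Some x => (dot a x < b)
  | HalfSp _ _, None => False
  end.

Definition tangent (d : nat) (B1 B2 : dball d) : Prop :=
  exists p, in_ball B1 p /\ in_ball B2 p /\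
    forall q, in_ball B1 q -> in_ball B2 q -> q = p.

(* Distinct
   vertices automatically get distinct balls, since interiors are nonempty,
   so this is exactly "isomorphic to the tangency graph of a packing". *)
Definition ball_packable (d : nat) (V : finType) (adj : rel V) : Prop :=
  exists B : V -> dball d,
    (forall v, valid_ball (B v)) /\
    (forall u v, u <> v -> forall p, ~ (in_interior (B u) p /\ in_interior (B v) p)) /\
    (forall u v, u <> v -> (adj u v <-> tangent (B u) (B v))).

Definition join_complete (n : nat) (V : finType) (e : rel V) : rel ('I_n + V)%type :=
  fun x y =>
    match x, y with
    | inl i, inl j => i != j
    | inl _, inr _ => true
    | inr _, inl _ => true
    | inr u, inr v => e u v
    end.
Arguments join_complete n {V} e x y.
Arguments ball_packable d {V} adj.

(* The proof works in inversive coordinates.  A d-ball B is encoded by the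
   quadratic function f_B(x) = a |x|^2 + b.x + c, normalised so that
   B = {f_B <= 0}, int B = {f_B < 0} and <f_B, f_B> = 1 for the Lorentz form
   <u, w> = b_u.b_w - 2 (a_u c_w + a_w c_u) on the coefficient space R^(d+2).
   1. Two tangent balls with disjoint interiors satisfy <f_B1, f_B2> = -1:
      otherwise a small step from the contact point (or a step far out
      towards infinity) reaches a common interior point.
   2. The d+1 balls of K_{d+1} together with one ball of G_3 give d+2 vectors
      with Gram matrix 2I - J, which is invertible when d >= 1; so these
      vectors determine every coefficient vector by its Lorentz products.
   3. Hence the unit vectors having product -1 with the d+1 balls of K_{d+1}
      lie on a line meeting the unit quadric in at most two points, and two
      of the three balls of G_3 get the same coefficient vector.
   4. Distinct balls of a packing have distinct coefficient vectors, since
      a ball has interior points: contradiction. *)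

Set Warnings "-notation-overridden,-ambiguous-paths".
From Stdlib Require Import Reals Lra Psatz FunctionalExtensionality.
From mathcomp Require Import all_boot all_algebra.
From mathcomp Require Import Rstruct.
From mathcomp.algebra_tactics Require ring.
Local Open Scope R_scope.
Set Implicit Arguments. Unset Strict Implicit.

Section Vectors.
Variable d : nat.
Implicit Types (u v w x z : vec d) (p q : R).

Definition vlin p u q w : vec d := fun i => p * u i + q * w i.
Definition vzero : vec d := fun _ => 0.

Lemma dot_comm u w : dot u w = dot w u.
Proof. by rewrite /dot; apply: eq_bigr => i _; ring. Qed.

Lemma dot_linl p u q w z : dot (vlin p u q w) z = p * dot u z + q * dot w z.
Proof.
rewrite /dot /vlin (big_distrr p) (big_distrr q) -big_split /=.
by apply: eq_bigr => i _; ring.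
Qed.

Lemma dot_linr p u q w z : dot z (vlin p u q w) = p * dot z u + q * dot z w.
Proof. by rewrite dot_comm dot_linl (dot_comm u) (dot_comm w). Qed.

Lemma dot_scalel k u z : dot (fun i => k * u i) z = k * dot u z.
Proof. by rewrite /dot (big_distrr k) /=; apply: eq_bigr => i _; ring. Qed.

Lemma dot_scaler k u z : dot z (fun i => k * u i) = k * dot z u.
Proof. by rewrite dot_comm dot_scalel dot_comm. Qed.

Lemma dot0l z : dot vzero z = 0.
Proof. by rewrite /dot big1 // => i _; rewrite /vzero; ring. Qed.

Lemma dot_ge0 u : 0 <= dot u u.
Proof. by rewrite /dot; elim/big_ind: _ => [|x y|i _]; [lra|lra|nra]. Qed.

Lemma dot_gt0 u : u <> vzero -> 0 < dot u u.
Proof.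
move=> u_nz; have [//|u0] : 0 < dot u u \/ dot u u = 0 by have := dot_ge0 u; lra.
apply: False_ind; apply: u_nz; apply: functional_extensionality => i.
apply: Rsqr_0_uniq; move: u0; rewrite /dot (bigD1 i) //= /Rsqr /vzero.
set rest := (X in _ + X = _).
have : 0 <= rest by apply: big_ind => *; nra.
have := Rle_0_sqr (u i); rewrite /Rsqr; lra.
Qed.

Lemma sqdistE x c : sqdist x c = dot x x - 2 * dot x c + dot c c.
Proof.
have -> : dot x x - 2 * dot x c + dot c c = dot (vlin 1 x (-1) c) (vlin 1 x (-1) c).
  by rewrite dot_linl !dot_linr (dot_comm c x); ring.
by rewrite /sqdist /dot /vlin; apply: eq_bigr => i _; ring.
Qed.

Lemma dot_unit_ge u w : dot u u = 1 -> dot w w = 1 -> -1 <= dot u w.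
Proof.
move=> uu ww; have := dot_ge0 (vlin 1 u 1 w).
by rewrite dot_linl !dot_linr (dot_comm w u); lra.
Qed.

End Vectors.

Lemma quad_neg_near0 a b c : a < 0 \/ (a = 0 /\ b < 0) ->
  exists2 del, 0 < del & forall t, 0 < t <= del -> a + t * b + t * t * c < 0.
Proof.
have abs_bounds := (Rle_abs b, Rle_abs c, Rabs_pos b, Rabs_pos c).
case: abs_bounds => [[[? ?] ?] ?]; case=> [a_lt0|[-> b_lt0]].
- pose K := Rabs b + Rabs c + 1; have K_gt0 : 0 < K by rewrite /K; lra.
  have bound : - a / K * K = - a by field; lra.
  exists (Rmin 1 (- a / K)) => [|t [t_gt0 t_le]].
    by apply: Rmin_glb_lt; [lra | apply: Rdiv_lt_0_compat; lra].
  have t_le1 := Rle_trans _ _ _ t_le (Rmin_l 1 _).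
  have t_le2 := Rle_trans _ _ _ t_le (Rmin_r 1 _).
  have tK : t * Rabs b + t * Rabs c + t <= - a.
    rewrite -bound (_ : _ + _ + t = t * K); last by rewrite /K; ring.
    by apply: Rmult_le_compat_r; lra.
  have tc : t * c <= Rabs c by nra.
  have : t * (t * c) <= t * Rabs c by apply: Rmult_le_compat_l; lra.
  have : t * b <= t * Rabs b by apply: Rmult_le_compat_l; lra.
  rewrite Rmult_assoc; lra.
- pose K := Rabs c + 1; have K_gt0 : 0 < K by rewrite /K; lra.
  have bound : - b / K * K = - b by field; lra.
  exists (- b / K) => [|t [t_gt0 t_le]]; first by apply: Rdiv_lt_0_compat; lra.
  have tK : t * Rabs c + t <= - b.
    rewrite -bound (_ : _ + t = t * K); last by rewrite /K; ring.
    by apply: Rmult_le_compat_r; lra.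
  have : t * c <= t * Rabs c by apply: Rmult_le_compat_l; lra.
  have -> : 0 + t * b + t * t * c = t * (b + t * c) by ring.
  move=> tc; apply: Rmult_pos_neg; lra.
Qed.

(* The same at infinity, by the substitution t -> 1/t: if the leading
   nonzero coefficient among c, b is negative, the quadratic is negative
   for all large enough t. *)
Lemma quad_neg_at_infty a b c : c < 0 \/ (c = 0 /\ b < 0) ->
  exists2 T, 0 < T & forall t, T <= t -> a + t * b + t * t * c < 0.
Proof.
move=> /(quad_neg_near0 a) [del del_gt0 near0].
have idel_gt0 := Rinv_0_lt_compat _ del_gt0.
exists (/ del) => // t T_le.
have t_gt0 : 0 < t by lra.
have s_le : / t <= del.
  by rewrite -(Rinv_inv del); apply: Rinv_le_contravar.
have := near0 (/ t) (conj (Rinv_0_lt_compat _ t_gt0) s_le).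
have -> : a + t * b + t * t * c = t * t * (c + / t * b + / t * / t * a).
  by field; lra.
by move=> neg; apply: Rmult_pos_neg => //; apply: Rmult_lt_0_compat.
Qed.

Section GeneralizedSpheres.
Variable d : nat.

Record gsphere := GSphere { gs_a : R; gs_b : vec d; gs_c : R }.

Implicit Types (u w z : gsphere) (x v : vec d) (p q t : R).

Definition gs_eval u x : R := gs_a u * dot x x + dot (gs_b u) x + gs_c u.
Definition gs_grad u x : vec d := vlin (2 * gs_a u) x 1 (gs_b u).

(* The Lorentz form of signature (d+1, 1) on coefficient vectors. *)
Definition lor u w : R :=
  dot (gs_b u) (gs_b w) - 2 * (gs_a u * gs_c w + gs_a w * gs_c u).

Lemma lor_sym u w : lor u w = lor w u.
Proof. by rewrite /lor dot_comm; ring. Qed.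

Lemma gs_eval_shift u x t v : gs_eval u (vlin 1 x t v) =
  gs_eval u x + t * dot (gs_grad u x) v + t * t * (gs_a u * dot v v).
Proof.
rewrite /gs_eval /gs_grad !dot_linl !dot_linr.
by rewrite (dot_comm v x) (dot_comm (gs_b u) x); ring.
Qed.

Lemma gs_eval_ray u t v : gs_eval u (vlin 1 (@vzero d) t v) =
  gs_c u + t * dot (gs_b u) v + t * t * (gs_a u * dot v v).
Proof.
rewrite gs_eval_shift /gs_eval /gs_grad dot_linl !dot0l.
by rewrite (dot_comm (gs_b u) (@vzero d)) dot0l; ring.
Qed.

Lemma dot_gs_grad u w x : dot (gs_grad u x) (gs_grad w x) =
  lor u w + 2 * gs_a w * gs_eval u x + 2 * gs_a u * gs_eval w x.
Proof.
rewrite /gs_eval /gs_grad /lor !dot_linl !dot_linr.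
by rewrite (dot_comm (gs_b u) x) (dot_comm (gs_b w) x); ring.
Qed.

Definition gs_lin p u q w : gsphere :=
  GSphere (p * gs_a u + q * gs_a w) (vlin p (gs_b u) q (gs_b w))
          (p * gs_c u + q * gs_c w).
Definition gs0 : gsphere := GSphere 0 (@vzero d) 0.

Lemma lor_linl p u q w z : lor (gs_lin p u q w) z = p * lor u z + q * lor w z.
Proof. by rewrite /lor /= dot_linl; ring. Qed.

Lemma lor0l z : lor gs0 z = 0.
Proof. by rewrite /lor /= dot0l; ring. Qed.

Lemma gs_lin_eq0 u w : gs_lin 1 u (-1) w = gs0 -> u = w.
Proof.
case: u w => [a1 b1 c1] [a2 b2 c2] [ea eb ec].
have eb' : b1 = b2.
  apply: functional_extensionality => i.
  by have := congr1 (fun f => f i) eb; rewrite /vlin /vzero; lra.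
have ea' : a1 = a2 by lra.
have ec' : c1 = c2 by lra.
by rewrite ea' eb' ec'.
Qed.

Definition interiors_meet u w : Prop :=
  exists y, gs_eval u y < 0 /\ gs_eval w y < 0.

Lemma interiors_meet_near u w x v :
  gs_eval u x <= 0 -> gs_eval w x <= 0 ->
  gs_eval u x < 0 \/ dot (gs_grad u x) v < 0 ->
  gs_eval w x < 0 \/ dot (gs_grad w x) v < 0 -> interiors_meet u w.
Proof.
have near z : gs_eval z x <= 0 -> gs_eval z x < 0 \/ dot (gs_grad z x) v < 0 ->
    exists2 del, 0 < del & forall t, 0 < t <= del -> gs_eval z (vlin 1 x t v) < 0.
  move=> le0 lt0_or_dec; have [del del_gt0 neg] : exists2 del, 0 < del &
      forall t, 0 < t <= del -> gs_eval z x + t * dot (gs_grad z x) v +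
                                t * t * (gs_a z * dot v v) < 0.
    apply: quad_neg_near0; case: lt0_or_dec => [|dec]; first by left.
    by have [|] := Rle_lt_or_eq_dec _ _ le0; [left | right].
  by exists del => // t t_in; rewrite gs_eval_shift; exact: neg.
move=> /near nu /near nw /nu [del1 del1_gt0 neg1] /nw [del2 del2_gt0 neg2].
exists (vlin 1 x (Rmin del1 del2) v); split.
- by apply: neg1; split; [apply: Rmin_glb_lt | apply: Rmin_l].
- by apply: neg2; split; [apply: Rmin_glb_lt | apply: Rmin_r].
Qed.

Lemma interiors_meet_far u w v :
  gs_a u * dot v v < 0 \/ (gs_a u * dot v v = 0 /\ dot (gs_b u) v < 0) ->
  gs_a w * dot v v < 0 \/ (gs_a w * dot v v = 0 /\ dot (gs_b w) v < 0) ->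
  interiors_meet u w.
Proof.
move=> /(quad_neg_at_infty (gs_c u)) [T1 _ neg1].
move=> /(quad_neg_at_infty (gs_c w)) [T2 _ neg2].
exists (vlin 1 (@vzero d) (Rmax T1 T2) v); rewrite !gs_eval_ray; split.
- exact/neg1/Rmax_l.
- exact/neg2/Rmax_r.
Qed.

End GeneralizedSpheres.

Section BallCoordinates.
Variable d : nat.
Implicit Types (u w : gsphere d) (B : dball d).

(* The normalised coefficient vector of a d-ball: for a ball of radius r
   about c it is (|x - c|^2 - r^2) / 2r, negated for an exterior ball, and
   for a half-space a.x <= b it is (a.x - b) / |a|. *)
Definition gsphere_of_ball B : gsphere d :=
  match B with
  | BallIn c r =>
      GSphere (/ (2 * r)) (fun i => - / r * c i) ((dot c c - r * r) / (2 * r))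
  | BallOut c r =>
      GSphere (- / (2 * r)) (fun i => / r * c i) (- ((dot c c - r * r) / (2 * r)))
  | HalfSp a b =>
      GSphere 0 (fun i => / sqrt (dot a a) * a i) (- b / sqrt (dot a a))
  end.

Lemma gsphere_of_ballE B x : valid_ball B ->
  (in_ball B (Some x) <-> gs_eval (gsphere_of_ball B) x <= 0) /\
  (in_interior B (Some x) <-> gs_eval (gsphere_of_ball B) x < 0).
Proof.
case: B => [c r|c r|a b] /= valid; rewrite /gs_eval /= dot_scalel.
- rewrite sqdistE (dot_comm c x).
  have -> : / (2 * r) * dot x x + - / r * dot x c + (dot c c - r * r) / (2 * r)
     = (dot x x - 2 * dot x c + dot c c - r * r) * / (2 * r) by field; lra.
  have : 0 < / (2 * r) by apply: Rinv_0_lt_compat; lra.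
  by split; split; nra.
- rewrite sqdistE (dot_comm c x).
  have -> : - / (2 * r) * dot x x + / r * dot x c + - ((dot c c - r * r) / (2 * r))
     = - (dot x x - 2 * dot x c + dot c c - r * r) * / (2 * r) by field; lra.
  have : 0 < / (2 * r) by apply: Rinv_0_lt_compat; lra.
  by split; split; nra.
- have : 0 < sqrt (dot a a) by apply/sqrt_lt_R0/dot_gt0.
  move=> /[dup] s_gt0 /Rinv_0_lt_compat.
  have -> : 0 * dot x x + / sqrt (dot a a) * dot a x + - b / sqrt (dot a a)
     = (dot a x - b) * / sqrt (dot a a) by field; lra.
  by split; split; nra.
Qed.

Lemma lor_gsphere_of_ball B : valid_ball B ->
  lor (gsphere_of_ball B) (gsphere_of_ball B) = 1.
Proof.
case: B => [c r|c r|a b] /= valid; rewrite /lor /= dot_scalel dot_scaler.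
- by field; lra.
- by field; lra.
- have aa_gt0 := dot_gt0 valid.
  rewrite -{3}(sqrt_sqrt (dot a a)); last lra.
  by field; apply/Rgt_not_eq/sqrt_lt_R0.
Qed.

Definition interiors_disjoint B1 B2 : Prop :=
  forall p, ~ (in_interior B1 p /\ in_interior B2 p).

(* Tangency at a finite point x: both f_u and f_w vanish at x, their
   gradients are unit vectors there, and the gradients must be opposite,
   i.e. <u, w> = -1, for otherwise the interiors meet near x. *)
Lemma gs_eval_at_contact u w x : lor w w = 1 -> ~ interiors_meet u w ->
  gs_eval u x <= 0 -> gs_eval w x <= 0 -> gs_eval u x = 0.
Proof.
move=> ww disj ux wx; have [u_lt0|] := Rle_lt_or_eq_dec _ _ ux; last by [].
case: disj; apply: (interiors_meet_near (v := vlin (-1) (gs_grad w x) 0 (gs_grad w x)) ux wx).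
  by left.
have [|w0] := Rle_lt_or_eq_dec _ _ wx; first by left.
by right; rewrite dot_linr dot_gs_grad w0 ww; lra.
Qed.

Lemma lor_tangent_finite u w x : lor u u = 1 -> lor w w = 1 ->
  ~ interiors_meet u w -> gs_eval u x <= 0 -> gs_eval w x <= 0 -> lor u w = -1.
Proof.
move=> uu ww disj ux wx.
have u0 := gs_eval_at_contact ww disj ux wx.
have disj' : ~ interiors_meet w u by move=> [y [? ?]]; apply: disj; exists y.
have w0 := gs_eval_at_contact uu disj' wx ux.
have gu : dot (gs_grad u x) (gs_grad u x) = 1 by rewrite dot_gs_grad u0 uu; ring.
have gw : dot (gs_grad w x) (gs_grad w x) = 1 by rewrite dot_gs_grad w0 ww; ring.
have guw : dot (gs_grad u x) (gs_grad w x) = lor u w by rewrite dot_gs_grad u0 w0; ring.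
have := dot_unit_ge gu gw; rewrite guw => /Rle_lt_or_eq_dec [lt|//].
case: disj; pose v := vlin (-1) (gs_grad u x) (-1) (gs_grad w x).
apply: (interiors_meet_near (v := v) ux wx); right; rewrite dot_linr.
- by rewrite gu guw; lra.
- by rewrite (dot_comm (gs_grad w x)) gw guw; lra.
Qed.

(* Tangency at infinity: a ball containing infinity has a <= 0, and if it
   touches a half-space (a = 0) there, their normal vectors are opposite;
   any other configuration makes the interiors meet far away. *)
Lemma lor_tangent_infty u w : lor u u = 1 -> lor w w = 1 ->
  ~ interiors_meet u w -> gs_a u <= 0 -> gs_a w = 0 -> lor u w = -1.
Proof.
move=> uu ww disj au aw.
have bw : dot (gs_b w) (gs_b w) = 1 by move: ww; rewrite /lor aw; lra.
have far_w : forall z, dot (gs_b w) z < 0 ->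
    gs_a w * dot z z < 0 \/ (gs_a w * dot z z = 0 /\ dot (gs_b w) z < 0).
  by move=> z wz; right; rewrite aw; split; [ring | lra].
have [au_lt0|au0] := Rle_lt_or_eq_dec _ _ au.
  case: disj; pose v := vlin (-1) (gs_b w) 0 (gs_b w).
  apply: (interiors_meet_far (v := v)); last by apply: far_w; rewrite dot_linr bw; lra.
  by left; rewrite dot_linl !dot_linr bw; lra.
have bu : dot (gs_b u) (gs_b u) = 1 by move: uu; rewrite /lor au0; lra.
have -> : lor u w = dot (gs_b u) (gs_b w) by rewrite /lor au0 aw; ring.
have /Rle_lt_or_eq_dec [lt|//] := dot_unit_ge bu bw.
case: disj; pose v := vlin (-1) (gs_b u) (-1) (gs_b w).
apply: (interiors_meet_far (v := v)).
- by right; rewrite au0; split; [ring | rewrite dot_linr bu; lra].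
- by apply: far_w; rewrite dot_linr bw (dot_comm (gs_b w)); lra.
Qed.

Lemma lor_tangent B1 B2 : valid_ball B1 -> valid_ball B2 ->
  interiors_disjoint B1 B2 -> tangent B1 B2 ->
  lor (gsphere_of_ball B1) (gsphere_of_ball B2) = -1.
Proof.
move=> valid1 valid2 disj [[x|] [in1 [in2 _]]].
all: have uu := lor_gsphere_of_ball valid1; have ww := lor_gsphere_of_ball valid2.
all: have ndisj : ~ interiors_meet (gsphere_of_ball B1) (gsphere_of_ball B2)
  by move=> [y [y1 y2]]; apply: (disj (Some y));
     rewrite (gsphere_of_ballE y valid1).2 (gsphere_of_ballE y valid2).2.
  apply: (lor_tangent_finite uu ww ndisj).
    exact/(gsphere_of_ballE x valid1).1.
  exact/(gsphere_of_ballE x valid2).1.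
have inf_disj := disj None; clear disj.
case: B1 B2 valid1 valid2 in1 in2 inf_disj uu ww ndisj => [c1 r1|c1 r1|a1 b1] [c2 r2|c2 r2|a2 b2] //=
  valid1 valid2 _ _ inf_disj uu ww ndisj.
- by case: inf_disj.
- apply: (lor_tangent_infty uu ww ndisj) => //=.
  have : 0 < / (2 * r1) by apply: Rinv_0_lt_compat; lra.
  lra.
- rewrite lor_sym; apply: (lor_tangent_infty ww uu) => //=.
    by move=> [y [? ?]]; apply: ndisj; exists y.
  have : 0 < / (2 * r2) by apply: Rinv_0_lt_compat; lra.
  lra.
- by apply: (lor_tangent_infty uu ww ndisj) => /=; lra.
Qed.

(* For d >= 1 every unit coefficient vector takes negative values: far out
   along a suitable ray if a <= 0, and at the vertex -b/2a if a > 0. *)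
Lemma gs_interior_nonempty u : (0 < d)%N -> lor u u = 1 ->
  exists y, gs_eval u y < 0.
Proof.
move=> d_gt0 uu.
suff : interiors_meet u u \/ exists y, gs_eval u y < 0.
  by case=> [[y [? _]]|]; [exists y|].
have [a_lt0|[a0|a_gt0]] := Rtotal_order (gs_a u) 0.
- left; pose i0 : 'I_d := Ordinal d_gt0.
  pose e : vec d := fun i => if i == i0 then 1 else 0.
  have ee : dot e e = 1.
    rewrite /dot (bigD1 i0) //= big1 /e ?eqxx; first ring.
    by move=> j /negbTE ->; ring.
  have far : gs_a u * dot e e < 0 by rewrite ee; lra.
  exact: (interiors_meet_far (or_introl far) (or_introl far)).
- left; have bb : dot (gs_b u) (gs_b u) = 1 by move: uu; rewrite /lor a0; lra.
  pose v := vlin (-1) (gs_b u) 0 (gs_b u).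
  have far : gs_a u * dot v v = 0 /\ dot (gs_b u) v < 0.
    by rewrite a0; split; [ring | rewrite /v dot_linr bb; lra].
  exact: (interiors_meet_far (or_intror far) (or_intror far)).
- right; exists (fun i => - / (2 * gs_a u) * gs_b u i).
  have bb : dot (gs_b u) (gs_b u) = 1 + 4 * gs_a u * gs_c u.
    by move: uu; rewrite /lor; lra.
  have : 4 * gs_a u * gs_eval u (fun i => - / (2 * gs_a u) * gs_b u i) = -1.
    by rewrite /gs_eval dot_scalel dot_scaler bb; field; lra.
  by nra.
Qed.

(* Step 4: distinct balls of a packing have distinct coefficient vectors,
   since equal vectors would give equal, nonempty interiors. *)
Lemma packed_gspheres_differ B1 B2 : (0 < d)%N ->
  valid_ball B1 -> valid_ball B2 -> interiors_disjoint B1 B2 ->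
  gsphere_of_ball B1 <> gsphere_of_ball B2.
Proof.
move=> d_gt0 valid1 valid2 disj same.
have [y y_in] := gs_interior_nonempty d_gt0 (lor_gsphere_of_ball valid1).
apply: (disj (Some y)).
by rewrite (gsphere_of_ballE y valid1).2 (gsphere_of_ballE y valid2).2 -same.
Qed.

End BallCoordinates.

Section SimplexFrames.
Variable d : nat.
Implicit Types (u v w : gsphere d).

(* Coordinates of u in R^(d+2), and of its Lorentz dual, chosen so that
   <u, w> is the standard inner product of coords u and dual_coords w. *)
Definition coords u : 'rV[R]_(d + 2) :=
  \row_k match split k with
         | inl i => gs_b u i
         | inr j => if val j == 0%N then gs_a u else gs_c u
         end.

Definition dual_coords u : 'rV[R]_(d + 2) :=
  \row_k match split k with
         | inl i => gs_b u i
         | inr j => if val j == 0%N then -2 * gs_c u else -2 * gs_a u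
         end.

Lemma lorE u w :
  lor u w = \big[Rplus/0]_(k < d + 2) (coords u ord0 k * dual_coords w ord0 k).
Proof.
rewrite (big_split_ord Rplus) /=.
rewrite (eq_bigr (fun i => gs_b u i * gs_b w i)); last first.
  by move=> i _; rewrite !mxE (unsplitK (inl i)).
rewrite (eq_bigr (fun j : 'I_2 => if val j == 0%N then gs_a u * (-2 * gs_c w)
                                  else gs_c u * (-2 * gs_a w))); last first.
  by move=> j _; rewrite !mxE (unsplitK (inr j)); case: (val j == 0%N).
rewrite !big_ord_recl big_ord0 /= /lor /dot.
(* the two sums over 'I_d agree only up to conversion of the index type *)
suff ring_id : forall S a c a' c' : R,
    S - 2 * (a * c' + a' * c) = S + (a * (-2 * c') + (c * (-2 * a') + 0)).
  exact: ring_id.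
by move=> *; ring.
Qed.

Lemma coords_eq0 v : coords v = 0%R -> v = gs0 d.
Proof.
move=> v0; have coord0 k : coords v ord0 k = 0 by rewrite v0 mxE.
have a0 := coord0 (rshift d (ord0 : 'I_2)).
have c0 := coord0 (rshift d (ord_max : 'I_2)).
rewrite mxE (unsplitK (inr _)) /= in a0.
rewrite mxE (unsplitK (inr _)) /= in c0.
case: v {v0} coord0 a0 c0 => a b c /= coord0 -> ->; congr GSphere.
apply: functional_extensionality => i.
by have := coord0 (lshift 2 i); rewrite mxE (unsplitK (inl i)).
Qed.

Section MatrixAlgebra.
Local Open Scope ring_scope.
Import GRing.Theory Num.Theory mathcomp.algebra_tactics.ring.

Lemma mul_const_mx (m n p : nat) (a b : R) :
  (const_mx a : 'M_(m, n)) *m (const_mx b : 'M_(n, p)) = const_mx (a * b *+ n).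
Proof.
apply/matrixP => i j; rewrite !mxE.
by under eq_bigr do rewrite !mxE; rewrite sumr_const card_ord.
Qed.

(* The Gram matrix 2I - J of a regular simplex frame is invertible for
   n > 2, with inverse I/2 - J/(2(n-2)). *)
Lemma simplex_gram_unit (n : nat) : (2 < n)%N ->
  ((2%:M - const_mx 1) : 'M[R]_n) \in unitmx.
Proof.
move=> n_gt2; have n2 : (n%:R - 2 : R) != 0.
  by rewrite subr_eq0 (eqr_nat R n 2) gtn_eqF.
suff inv : ((2%:M - const_mx 1) : 'M[R]_n) *m
           (2^-1%:M - const_mx (2^-1 / (n%:R - 2))) = 1%:M.
  by have [] := mulmx1_unit inv.
rewrite mulmxBl !mulmxBr mul_const_mx mul_scalar_mx mul_mx_scalar mul_scalar_mx.
apply/matrixP => i j; rewrite !mxE -mulr_natr.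
by case: (i == j) => /=; field.
Qed.

Lemma simplex_gram_kernel (n : nat) (P Q : 'M[R]_n) (x : 'rV[R]_n) :
  (2 < n)%N -> P *m Q^T = 2%:M - const_mx 1 -> x *m Q^T = 0 -> x = 0.
Proof.
move=> n_gt2 gram x_ker.
have : Q^T \in unitmx.
  by move: (simplex_gram_unit n_gt2); rewrite -gram unitmx_mul => /andP[].
by move=> Q_unit; rewrite -(mulmxK Q_unit x) x_ker mul0mx.
Qed.

End MatrixAlgebra.

Lemma simplex_frame_orth (r : 'I_(d + 2) -> gsphere d) : (0 < d)%N ->
  (forall k, lor (r k) (r k) = 1) ->
  (forall k l, k != l -> lor (r k) (r l) = -1) ->
  forall v, (forall k, lor v (r k) = 0) -> v = gs0 d.
Proof.
move=> d_gt0 r_unit r_simplex v v_orth; apply: coords_eq0.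
have d2 : (2 < d + 2)%N by rewrite addn2 ltnS ltnS.
apply: (simplex_gram_kernel d2 (P := (\matrix_(k, c) coords (r k) ord0 c)%R)
                              (Q := (\matrix_(k, c) dual_coords (r k) ord0 c)%R)).
- apply/matrixP => k l; rewrite !mxE.
  transitivity (lor (r k) (r l)).
    by rewrite lorE; apply: eq_bigr => c _; rewrite !mxE.
  case: (eqVneq k l) => [->|kl].
    by rewrite r_unit GRing.mulr1n GRing.mulr2n GRing.addrK.
  by rewrite r_simplex // GRing.mulr0n GRing.sub0r.
- apply/matrixP => i k; rewrite !mxE (ord1 i).
  transitivity (lor v (r k)).
    by rewrite lorE; apply: eq_bigr => c _; rewrite !mxE.
  by rewrite v_orth.
Qed.

End SimplexFrames.

Section TangentToSimplex.
Variables (d : nat) (d_gt0 : (0 < d)%N).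
Variables (b : 'I_d.+1 -> gsphere d) (u0 : gsphere d).
Hypothesis b_unit : forall i, lor (b i) (b i) = 1.
Hypothesis b_simplex : forall i j, i != j -> lor (b i) (b j) = -1.
Hypothesis u0_unit : lor u0 u0 = 1.
Hypothesis b_u0 : forall i, lor (b i) u0 = -1.

(* The vectors b_i together with u0 form a simplex frame, so every vector
   is determined by its products with them. *)
Lemma frame_determines u w :
  (forall i, lor u (b i) = lor w (b i)) -> lor u u0 = lor w u0 -> u = w.
Proof.
move=> ub uu0; apply: gs_lin_eq0.
pose r (k : 'I_(d + 2)) := if (k < d.+1)%N then b (inord k) else u0.
apply: (simplex_frame_orth (r := r) d_gt0) => [k|k l kl|k]; rewrite /r.
- by case: ifP.
- have d2 : (d + 2 <= d.+2)%N by rewrite addn2.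
  have k_le := leq_trans (ltn_ord k) d2; have l_le := leq_trans (ltn_ord l) d2.
  case: ifP => kd; case: ifP => ld.
  + apply: b_simplex; apply: contraNneq kl => /(congr1 (@nat_of_ord _)).
    by rewrite !inordK // => /esym /val_inj ->.
  + exact: b_u0.
  + by rewrite lor_sym b_u0.
  + have top m : (m < d.+2)%N -> (m < d.+1)%N = false -> m = d.+1.
      by move=> m_lt m_ge; apply/eqP; rewrite eqn_leq -ltnS m_lt leqNgt m_ge.
    by case/eqP: kl; apply/val_inj; rewrite /= (top _ k_le kd) (top _ l_le ld).
- by rewrite lor_linl; case: ifP => _; rewrite ?ub ?uu0; ring.
Qed.

(* Step 3: the unit vectors with product -1 against every b_i form the
   intersection of a line through u0 with the unit quadric, so there are
   at most two of them. *)
Lemma two_tangent_at_most u w : lor u u = 1 -> lor w w = 1 ->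
  (forall i, lor (b i) u = -1) -> (forall i, lor (b i) w = -1) ->
  u = u0 \/ w = u0 \/ u = w.
Proof.
move=> uu ww bu bw.
have sym_b z : (forall i, lor (b i) z = -1) -> forall i, lor z (b i) = -1.
  by move=> bz i; rewrite lor_sym bz.
have [[bu' bw'] bu0'] := (sym_b _ bu, sym_b _ bw, sym_b _ b_u0).
set p := lor u u0 - 1; set q := lor w u0 - 1.
(* q (u - u0) - p (w - u0) is orthogonal to the frame, hence zero *)
have parallel z : q * (lor u z - lor u0 z) = p * (lor w z - lor u0 z).
  have : gs_lin q (gs_lin 1 u (-1) u0) (- p) (gs_lin 1 w (-1) u0) = gs0 d.
    apply: frame_determines => [i|]; rewrite lor0l !lor_linl.
      by rewrite bu' bw' bu0'; ring.
    by rewrite u0_unit /p /q; ring.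
  by move/(congr1 (fun y => lor y z)); rewrite lor0l !lor_linl; lra.
have [p0|p_nz] := Req_dec p 0.
  left; apply: frame_determines => [i|]; first by rewrite bu' bu0'.
  by rewrite u0_unit; rewrite /p in p0; lra.
have [q0|q_nz] := Req_dec q 0.
  right; left; apply: frame_determines => [i|]; first by rewrite bw' bu0'.
  by rewrite u0_unit; rewrite /q in q0; lra.
(* at z = u and z = w the identity gives <u,w> = 1 + p - q = 1 + q - p *)
right; right; apply: frame_determines => [i|]; first by rewrite bu' bw'.
have := parallel u; have := parallel w.
rewrite uu ww (lor_sym u0 u) (lor_sym u0 w) (lor_sym w u).
have -> : lor u u0 = p + 1 by rewrite /p; ring.
have -> : lor w u0 = q + 1 by rewrite /q; ring.
move=> at_w at_u.
have e1 : lor u w - p - 1 = - q.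
  by apply: (Rmult_eq_reg_l p) => //; lra.
have e2 : lor u w - q - 1 = - p.
  by apply: (Rmult_eq_reg_l q) => //; lra.
lra.
Qed.

End TangentToSimplex.

Lemma no_three_balls_on_simplex d (b : 'I_d.+1 -> dball d) (X : 'I_3 -> dball d) :
  (0 < d)%N ->
  (forall i, valid_ball (b i)) -> (forall j, valid_ball (X j)) ->
  (forall i j, i != j -> interiors_disjoint (b i) (b j) /\ tangent (b i) (b j)) ->
  (forall i j, interiors_disjoint (b i) (X j) /\ tangent (b i) (X j)) ->
  (forall j k, j != k -> interiors_disjoint (X j) (X k)) -> False.
Proof.
move=> d_gt0 b_valid X_valid bb bX XX.
pose g i := gsphere_of_ball (b i); pose x j := gsphere_of_ball (X j).
have x_unit j : lor (x j) (x j) = 1 := lor_gsphere_of_ball (X_valid j).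
have b_simplex i j : i != j -> lor (g i) (g j) = -1.
  by move=> ij; have [? ?] := bb i j ij; apply: lor_tangent.
have b_x i j : lor (g i) (x j) = -1 by have [? ?] := bX i j; apply: lor_tangent.
have x_differ j k : j != k -> x j <> x k.
  by move=> jk; apply: packed_gspheres_differ (XX j k jk).
pose j0 : 'I_3 := @Ordinal 3 0 isT; pose j1 : 'I_3 := @Ordinal 3 1 isT.
pose j2 : 'I_3 := @Ordinal 3 2 isT.
have [] := two_tangent_at_most d_gt0 (fun i => lor_gsphere_of_ball (b_valid i))
  b_simplex (x_unit j0) (b_x ^~ j0) (x_unit j1) (x_unit j2) (b_x ^~ j1) (b_x ^~ j2).
- by apply: x_differ; rewrite /j0 /j1.
- by case; apply: x_differ; rewrite /j0 /j1 /j2.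
Qed.

Local Close Scope R_scope.

Theorem corollary3p5 (d : nat) (hd : 1 <= d) (e : rel 'I_3)
  (e_sym : symmetric e) (e_irr : irreflexive e) :
  ~ ball_packable d (join_complete d.+1 e).
Proof.
move=> [B [valid [disj tangency]]].
have edge u v : u <> v -> join_complete d.+1 e u v ->
    interiors_disjoint (B u) (B v) /\ tangent (B u) (B v).
  by move=> uv adj; split; [exact: disj | exact/(tangency u v uv)].
apply: (@no_three_balls_on_simplex d (fun i => B (inl i)) (fun j => B (inr j)) hd).
- by move=> i; apply: valid.
- by move=> j; apply: valid.
- move=> i j ij; apply: edge => //.
  by move=> [eq_ij]; rewrite eq_ij eqxx in ij.
- by move=> i j; apply: edge.
- by move=> j k jk; apply: disj => -[eq_jk]; rewrite eq_jk eqxx in jk.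
Qed.
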